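(* Let $n$ be an odd positive integer, and let $a,b$ be distinct integers with $0<a,b<n$, $b$ odd and $a$ even, such that $G=C_{2n}(a,b,n)$ is a connected $5$-regular circulant graph. Then $G$ admits a factorization (in the sense described in the context) as a Cartesian product of a $3$-regular circulant graph and a $2$-regular circulant graph if and only if there exist positive integers $p,q$ with $p>2$, $1<q<n$, $p\mid a$, $q\mid b$, $pq=2n$ and $\gcd(p,q)=1$.
   Context: For an integer $m$ and a set $R$ of positive integers each at most $m/2$, the circulant graph $C_m(R)$ has vertex set $\{0,1,\dots,m-1\}$, with $i$ and $j$ adjacent iff $\min(|i-j|,\,m-|i-j|)\in R$; it is regular of degree $2|R|$ if $m/2\notin R$ and of degree $2|R|-1$ if $m/2\in R$. $C_{2n}(a,b,n)$ denotes the circulant graph on $2n$ vertices with jump set $\{a,b,n\}$. The Cartesian product $G_1\square G_2$ has vertex set $V(G_1)\times V(G_2)$, with $(u_1,v_1)\sim(u_2,v_2)$ iff either $u_1=u_2$ and $v_1v_2\in E(G_2)$, or $v_1=v_2$ and $u_1u_2\in E(G_1)$. The factorization theorem for circulant graphs states: if $p,q$ are relatively prime, $R\subseteq[1,p/2]$, $S\subseteq[1,q/2]$ and $T=qR\cup pS$ (where $qR=\{qr:r\in R\}$, $pS=\{ps:s\in S\}$), then $C_{pq}(T)\cong C_p(R)\square C_q(S)$. ''$G=C_{2n}(a,b,n)$ admits a factorization as a Cartesian product of a $3$-regular and a $2$-regular circulant graph'' means: there exist relatively prime integers $p,q>1$ with $pq=2n$ and sets of integers $R\subseteq[1,p/2]$,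 $S\subseteq[1,q/2]$ with $qR\cup pS=\{a,b,n\}$, such that $C_p(R)$ is $3$-regular and $C_q(S)$ is $2$-regular (so that $G\cong C_p(R)\square C_q(S)$ by the factorization theorem). *)

From mathcomp Require Import all_boot.
Set Implicit Arguments. Unset Strict Implicit. Unset Printing Implicit Defensive.

Definition circ_dist (i j m : nat) : nat :=
  let d := if i <= j then j - i else i - j in minn d (m - d).

Definition circ_adj (m : nat) (R : pred nat) : rel 'I_m :=
  fun i j => R (circ_dist i j m).

Definition circ_regular (m : nat) (R : pred nat) (k : nat) : Prop :=
  forall i : 'I_m, #|[set j : 'I_m | circ_adj R i j]| = k.

Definition circ_connected (m : nat) (R : pred nat) : Prop :=
  forall i j : 'I_m, connect (circ_adj R) i j.

Definition jumps3 (a b n : nat) : pred nat := [pred x | (x == a) || (x == b) || (x == n)].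

Definition jump_set_in (R : pred nat) (m : nat) : Prop :=
  forall r, R r -> 0 < r /\ 2 * r <= m.

Definition scaled_union_eq (q : nat) (R : pred nat) (p : nat) (S : pred nat)
    (T : pred nat) : Prop :=
  forall x, T x <-> ((exists2 r, R r & x = q * r) \/ (exists2 s, S s & x = p * s)).

(* C_{2n}(a,b,n) admits a factorization as a Cartesian product of a 3-regular
   and a 2-regular circulant graph, via the factorization theorem. *)
Definition admits_3_2_factorization (n a b : nat) : Prop :=
  exists p q : nat, exists R S : pred nat,
    [/\ 1 < p, 1 < q, coprime p q & p * q = 2 * n] /\
    [/\ jump_set_in R p, jump_set_in S q,
        scaled_union_eq q R p S (jumps3 a b n),
        circ_regular p R 3 & circ_regular q S 2].

From mathcomp Require Import all_boot zify.
Set Implicit Arguments. Unset Strict Implicit. Unset Printing Implicit Defensive.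

(* Since pq = 2n with p, q coprime, exactly one of p, q is even, and the odd
   jumps n and b are multiples of the odd one: they come from the jump set of
   the factor of even order.  In that factor n yields the jump of half its
   order, which contributes one neighbour, while b yields a different jump,
   which contributes two.  Hence the even factor is the 3-regular C_p(R) with
   R = {b/q, n/q}; a third jump a/q would raise its degree to 5, so a = p s
   with s in S.  Conversely, for p = 2h, a = k p and b = l q, the sets
   R = {l, h} and S = {k} realize the factorization. *)

Lemma card_set_val_mem m (s : seq nat) :
  uniq s -> all (fun x => x < m) s -> #|[set j : 'I_m | val j \in s]| = size s.
Proof.
move=> s_uniq /allP s_lt; rewrite cardE -(size_map val).
apply/perm_size/uniq_perm => //.
  by rewrite (map_inj_uniq val_inj) enum_uniq.
move=> x; apply/mapP/idP => [[j]|xs]; first by rewrite mem_enum inE => ? ->.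
by exists (Ordinal (s_lt x xs)); rewrite ?mem_enum ?inE.
Qed.

Lemma circ_dist_eqE m (i j : 'I_m) d : 0 < d -> 2 * d <= m ->
  (circ_dist i j m == d) = (val j \in [:: (i + d) %% m; (i + (m - d)) %% m]).
Proof.
move=> d_gt0 d_le; have := ltn_ord i; have := ltn_ord j => /= jm im.
rewrite !inE !modnD ?(modn_small im) ?modn_small /circ_dist; try lia.
by case: leqP; case: leqP; case: leqP => *; lia.
Qed.

Lemma circ_regular_jump m s :
  0 < s -> 2 * s < m -> circ_regular m [pred x | x == s] 2.
Proof.
move=> s_gt0 s_lt i; have im := ltn_ord i.
have m_gt0 : 0 < m by lia.
rewrite -[2]/(size [:: (i + s) %% m; (i + (m - s)) %% m]).
rewrite -(@card_set_val_mem m).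
- apply: eq_card => j.
  by rewrite inE /circ_adj /= circ_dist_eqE ?(ltnW s_lt) // !inE.
- by rewrite /= inE andbT eqn_modDl !modn_small; lia.
- by rewrite /= !ltn_pmod.
Qed.

Lemma circ_regular_jump_half m r h : 0 < r -> 2 * r < m -> 2 * h = m ->
  circ_regular m [pred x | (x == r) || (x == h)] 3.
Proof.
move=> r_gt0 r_lt hm i; have im := ltn_ord i.
have m_gt0 : 0 < m by lia.
have mh : m - h = h by lia.
rewrite -[3]/(size [:: (i + r) %% m; (i + (m - r)) %% m; (i + h) %% m]).
rewrite -(@card_set_val_mem m).
- apply: eq_card => j; rewrite !inE /circ_adj /= !circ_dist_eqE; try lia.
  by rewrite mh !inE orbb orbA.
- by rewrite /= !inE andbT !eqn_modDl !modn_small; lia.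
- by rewrite /= !ltn_pmod.
Qed.

Lemma circ_regular_size_le m (R : pred nat) k (s : seq nat) :
  0 < m -> circ_regular m R k -> uniq s ->
  (forall x, x \in s -> x < m /\ R (circ_dist 0 x m)) -> size s <= k.
Proof.
move=> m_gt0 R_reg s_uniq s_adj; rewrite -(R_reg (Ordinal m_gt0)).
have s_lt : all (fun x => x < m) s by apply/allP => x /s_adj[].
rewrite -(card_set_val_mem s_uniq s_lt).
by apply/subset_leq_card/subsetP => j; rewrite !inE => /s_adj[].
Qed.

Lemma circ_dist0_jump m r : 2 * r <= m ->
  circ_dist 0 r m = r /\ circ_dist 0 (m - r) m = r.
Proof. by rewrite /circ_dist !leq0n !subn0; lia. Qed.

Lemma circ_regular_short_jumps_ge4 m (R : pred nat) k r1 r2 :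
  circ_regular m R k -> R r1 -> R r2 -> r1 != r2 ->
  0 < r1 -> 2 * r1 < m -> 0 < r2 -> 2 * r2 < m -> 4 <= k.
Proof.
move=> R_reg Rr1 Rr2 r12 r1_gt0 r1_lt r2_gt0 r2_lt.
have [d11 d12] := circ_dist0_jump (ltnW r1_lt).
have [d21 d22] := circ_dist0_jump (ltnW r2_lt).
apply: (@circ_regular_size_le m R k [:: r1; m - r1; r2; m - r2]) => //=.
- by lia.
- by rewrite !inE; lia.
- move=> x; rewrite !inE => /or4P[]/eqP->;
  by rewrite ?d11 ?d12 ?d21 ?d22; split => //; lia.
Qed.

Lemma circ_regular_short_half_jumps_ge3 m (R : pred nat) k r h :
  circ_regular m R k -> R r -> R h -> 0 < r -> 2 * r < m -> 2 * h = m -> 3 <= k.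
Proof.
move=> R_reg Rr Rh r_gt0 r_lt hm.
have [dr1 dr2] := circ_dist0_jump (ltnW r_lt).
have [dh _] := circ_dist0_jump (eq_leq hm).
apply: (@circ_regular_size_le m R k [:: r; m - r; h]) => //=.
- by lia.
- by rewrite !inE; lia.
- move=> x; rewrite !inE => /or3P[]/eqP->;
  by rewrite ?dr1 ?dr2 ?dh; split => //; lia.
Qed.

Lemma scaled_union_eq_sym q R p S T :
  scaled_union_eq q R p S T -> scaled_union_eq p S q R T.
Proof. by move=> U x; have := U x; tauto. Qed.

Lemma scaled_union_odd q R p S T x : scaled_union_eq q R p S T ->
  T x -> odd x -> ~~ odd p -> exists2 r, R r & x = q * r.
Proof.
move=> U /U[//|[s _ x_eq]] x_odd p_even.
by move: x_odd; rewrite x_eq oddM (negbTE p_even).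
Qed.

Lemma half_jump n p q r : p * q = 2 * n -> n = q * r -> 0 < q -> p = 2 * r.
Proof.
move=> pq n_eq q_gt0; apply/eqP.
by rewrite -(eqn_pmul2l q_gt0) mulnC pq n_eq mulnCA.
Qed.

Section Factorization.

Variables n a b : nat.
Hypotheses (n_odd : odd n) (a_gt0 : 0 < a) (a_lt_n : a < n).
Hypotheses (b_odd : odd b) (b_lt_n : b < n) (a_neq_b : a != b).

Lemma jumps3_mem : [/\ jumps3 a b n a, jumps3 a b n b & jumps3 a b n n].
Proof. by rewrite /jumps3 /= !eqxx !orbT. Qed.

Lemma three_regular_factor_even p q R S :
  1 < q -> p * q = 2 * n -> jump_set_in S q ->
  scaled_union_eq q R p S (jumps3 a b n) -> circ_regular q S 2 -> ~~ odd p.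
Proof.
move=> q_gt1 pq S_in U S_reg; apply/negP => p_odd.
have q_even : ~~ odd q by have := oddM p q; rewrite pq oddM p_odd /= => <-.
have [_ Tb Tn] := jumps3_mem.
have [sn Ssn n_eq] := scaled_union_odd (scaled_union_eq_sym U) Tn n_odd q_even.
have [sb Ssb b_eq] := scaled_union_odd (scaled_union_eq_sym U) Tb b_odd q_even.
have p_gt0 := odd_gt0 p_odd.
have q_eq : q = 2 * sn by apply: (half_jump _ n_eq p_gt0); rewrite mulnC.
have [sb_gt0 _] := S_in sb Ssb.
have sb_lt : sb < sn by rewrite -(ltn_pmul2l p_gt0) -b_eq -n_eq.
have := circ_regular_short_half_jumps_ge3 S_reg Ssb Ssn sb_gt0 _ (esym q_eq).
by rewrite q_eq ltn_pmul2l // => /(_ sb_lt).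
Qed.

Lemma factorization_dvd : admits_3_2_factorization n a b ->
  exists p q : nat,
    [/\ 2 < p, 1 < q < n, p %| a & q %| b] /\ p * q = 2 * n /\ coprime p q.
Proof.
case=> p [q [R [S [[p_gt1 q_gt1 cop pq] [R_in S_in U R_reg S_reg]]]]].
have p_even := three_regular_factor_even q_gt1 pq S_in U S_reg.
have [Ta Tb Tn] := jumps3_mem.
have q_gt0 : 0 < q by apply: ltnW.
have [rn Rrn n_eq] := scaled_union_odd U Tn n_odd p_even.
have [rb Rrb b_eq] := scaled_union_odd U Tb b_odd p_even.
have p_eq : p = 2 * rn := half_jump pq n_eq q_gt0.
have rb_lt : rb < rn by rewrite -(ltn_pmul2l q_gt0) -b_eq -n_eq.
have [rb_gt0 _] := R_in rb Rrb.
have [sa _ a_eq] : exists2 s, S s & a = p * s.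
  case: ((U a).1 Ta) => [[ra Rra a_eq]|//]; exfalso.
  have [ra_gt0 _] := R_in ra Rra.
  have ra_lt : ra < rn by rewrite -(ltn_pmul2l q_gt0) -a_eq -n_eq.
  have rab : ra != rb by apply: contraNneq a_neq_b; rewrite a_eq b_eq => ->.
  have := circ_regular_short_jumps_ge4 R_reg Rra Rrb rab ra_gt0 _ rb_gt0 _.
  by lia.
have rn_ge2 : 1 < rn by apply: leq_ltn_trans rb_lt.
exists p, q; split=> //; split.
- by rewrite p_eq; lia.
- by rewrite q_gt1 n_eq -{1}[q]muln1 ltn_pmul2l.
- by rewrite a_eq dvdn_mulr.
- by rewrite b_eq dvdn_mulr.
Qed.

Lemma dvd_factorization :
  (exists p q : nat,
    [/\ 2 < p, 1 < q < n, p %| a & q %| b] /\ p * q = 2 * n /\ coprime p q) ->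
  admits_3_2_factorization n a b.
Proof.
case=> p [q [[p_gt2 /andP[q_gt1 q_lt] /dvdnP[ka a_eq] /dvdnP[kb b_eq]]]].
case=> pq cop.
have q_odd : odd q by move: b_odd; rewrite b_eq oddM => /andP[].
have p_even : 2 %| p.
  rewrite dvdn2; apply/negP => p_odd.
  by have := oddM p q; rewrite pq oddM p_odd q_odd.
have [h p_eq] := dvdnP p_even.
have n_eq : n = q * h by nia.
have kb_lt : kb < h by nia.
have ka_lt : 2 * ka < q by nia.
have ka_gt0 : 0 < ka by move: a_gt0; rewrite a_eq muln_gt0 => /andP[].
exists p, q, [pred x | (x == kb) || (x == h)], [pred x | x == ka].
split; first by split=> //; apply: ltnW.
split.
- by move=> x /orP[]/eqP->; lia.
- by move=> x /eqP->; lia.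
- move=> x; rewrite /jumps3 /= -!orbA; split.
    by case/or3P=> /eqP->;
      [right; exists ka | left; exists kb | left; exists h];
      rewrite ?eqxx ?orbT //; lia.
  by case=> [[r /orP[]/eqP-> ->]|[s /eqP-> ->]]; apply/or3P;
    [constructor 2 | constructor 3 | constructor 1]; apply/eqP; lia.
- by apply: circ_regular_jump_half; lia.
- by apply: circ_regular_jump; lia.
Qed.

End Factorization.

Theorem theorem30 (n a b : nat) :
  odd n -> 0 < n ->
  a != b -> 0 < a < n -> 0 < b < n -> odd b -> ~~ odd a ->
  circ_connected (2 * n) (jumps3 a b n) ->
  circ_regular (2 * n) (jumps3 a b n) 5 ->
  admits_3_2_factorization n a b <->
  (exists p q : nat,
     [/\ 2 < p, 1 < q < n, p %| a & q %| b] /\ p * q = 2 * n /\ coprime p q).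
Proof.
move=> n_odd _ a_neq_b /andP[a_gt0 a_lt_n] /andP[_ b_lt_n] b_odd _ _ _.
split; [exact: factorization_dvd | exact: dvd_factorization].
Qed.
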